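(* Let $\mathcal{G}=(V,E_1,\dots,E_T)$ be a public transport graph on $n=|V|$ vertices composed of the routes $\mathcal{W}_1,\dots,\mathcal{W}_m$, such that the underlying graph $U(\mathcal{G})$ is connected. Then there exists an exploration of $\mathcal{G}$ of length at most $(2n-3)\max_{i\in[1,m]}L_i$, where $L_i=|\mathcal{W}_i|$.
   Context: A temporal graph $\mathcal{G}=(V,E_1,\dots,E_T)$ consists of a finite vertex set $V$ and an ordered sequence of edge sets $E_1,\dots,E_T$ on $V$ (timesteps); $T$ is the lifetime; an edge $e$ is active at timestep $t$ if $e\in E_t$; the underlying graph is $U(\mathcal{G})=(V,\bigcup_t E_t)$. A temporal walk is a sequence $((v_{i_1},v_{i_2}),t_1),\dots,((v_{i_{m-1}},v_{i_m}),t_{m-1})$ such that the edges form a walk (end point of each edge is the start point of the next), with $t_1<\dots<t_{m-1}$; its length is $t_{m-1}$ (the timestep of its last step). In a temporal graph, a temporal walk additionally requires each edge $(v_{i_j},v_{i_{j+1}})$ to be active at timestep $t_j$; it explores $\mathcal{G}$ if every vertex of $V$ belongs to some edge of the walk. A public transport graph with lifetime $T$ is defined by a set of temporal walks (routes) $\mathcal{W}_1,\dots,\mathcal{W}_m$ over a common vertex set $V$: writing the $j$-th step of $\mathcal{W}_i$ as $(\mathcal{W}_i[j],\mathcal{T}_i[j])$ and $L_i=|\mathcal{W}_i|$ (the last timestep of $\mathcal{W}_i$), for each $t\in[1,T]$ an edge $e$ belongs to $E_t$ iff there exist $i\in[1,m]$ and $j$ with $e=\mathcal{W}_i[j]$ and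 $\mathcal{T}_i[j]=t \bmod L_i$. (Routes are repeated periodically.) *)

From mathcomp Require Import all_boot.
From Stdlib Require Import Relations.
Set Implicit Arguments. Unset Strict Implicit. Unset Printing Implicit Defensive.

Definition step (V : Type) := ((V * V) * nat)%type.
Definition src {V : Type} (x : step V) : V := x.1.1.
Definition dst {V : Type} (x : step V) : V := x.1.2.
Definition time {V : Type} (x : step V) : nat := x.2.

Definition next_step {V : eqType} (x y : step V) : bool :=
  (dst x == src y) && (time x < time y).

(* A temporal walk (ignoring activity of edges): nonempty, timesteps >= 1,
   consecutive edges form a walk, strictly increasing timesteps. *)
Definition is_temporal_walk {V : eqType} (s : seq (step V)) : bool :=
  [&& s != [::], all (fun x => 0 < time x) s & sorted next_step s].

Definition walk_length {V : Type} (s : seq (step V)) : nat :=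
  last 0 (map time s).

Definition step_edge {V : eqType} (x : step V) (u v : V) : bool :=
  ((src x == u) && (dst x == v)) || ((src x == v) && (dst x == u)).

(* Public transport graph with routes W : 'I_m -> seq (step V):
   edge {u,v} is in E_t iff some step j of some route W_i has edge {u,v}
   and T_i[j] = t (mod L_i), where L_i = walk_length (W i).
   The routes repeat periodically, so E_t is defined for every t >= 1. *)
Definition pt_active {V : eqType} {m : nat} (W : 'I_m -> seq (step V))
  (t : nat) (u v : V) : Prop :=
  exists i : 'I_m, exists2 x, x \in W i &
    step_edge x u v /\ time x %% walk_length (W i) = t %% walk_length (W i).

Definition pt_temporal_walk {V : eqType} {m : nat} (W : 'I_m -> seq (step V))
  (s : seq (step V)) : Prop :=
  is_temporal_walk s /\ forall x, x \in s -> pt_active W (time x) (src x) (dst x).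

Definition explores_all {V : finType} (s : seq (step V)) : Prop :=
  forall v : V, exists2 x, x \in s & (src x == v) || (dst x == v).

Definition underlying_edge {V : eqType} {m : nat} (W : 'I_m -> seq (step V))
  (u v : V) : Prop := exists t, 0 < t /\ pt_active W t u v.

Definition underlying_connected {V : eqType} {m : nat}
  (W : 'I_m -> seq (step V)) : Prop :=
  forall u v : V, clos_refl_trans V (underlying_edge W) u v.

From mathcomp Require Import all_boot zify.
From Stdlib Require Import Relations.

Set Implicit Arguments. Unset Strict Implicit. Unset Printing Implicit Defensive.

(* Since U(G) is connected, there is a closed walk from a root r through all n
   vertices with at most 2 (n - 1) edges: grow it by detours u -> w -> u along
   edges leaving the visited set.  Dropping its last edge (which returns to r)
   leaves a walk through all vertices with at most 2n - 3 edges.  Every route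
   W_i repeats with period L_i <= max L_i, so each edge of U(G) is active in
   every window of max L_i consecutive timesteps; taking each edge of the walk
   within max L_i timesteps after the previous one gives the exploration. *)

Lemma exists_congr_in_window (L a c : nat) : 0 < L ->
  exists t, [/\ a < t, t <= a + L & t = c %[mod L]].
Proof.
move=> L_gt0; set r := c %% L; set q := (a + L - r) %/ L.
have r_lt : r < L by rewrite ltn_pmod.
have := divn_eq (a + L - r) L; have := ltn_pmod (a + L - r) L_gt0.
rewrite -/q => rem_lt def_q.
exists (r + q * L); split; [lia | lia |].
by rewrite addnC modnMDl modn_mod.
Qed.

Lemma walk_length_gt0 (V : eqType) (s : seq (step V)) :
  is_temporal_walk s -> 0 < walk_length s.
Proof.
case/and3P; case/lastP: s => [//|s y] _.
by rewrite /walk_length map_rcons last_rcons all_rcons => /andP[].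
Qed.

Lemma path_next_step_time (V : eqType) (x0 : step V) s :
  path next_step x0 s -> all (fun x => time x0 < time x) s.
Proof.
move=> x0s; rewrite -(all_map time (ltn (time x0))).
apply: (order_path_min ltn_trans); rewrite path_map.
by apply: sub_path x0s => x y /andP[].
Qed.

Section Walks.

Variables (T : Type) (e : T -> T -> Prop).

(* [path] for a Prop-valued relation, as [underlying_edge] is not decidable. *)
Fixpoint ppath (x : T) (p : seq T) : Prop :=
  if p is y :: p' then e x y /\ ppath y p' else True.

Lemma ppath_cat x p1 p2 :
  ppath x (p1 ++ p2) <-> ppath x p1 /\ ppath (last x p1) p2.
Proof. by elim: p1 x => [|y p1 IH] x /=; [tauto | rewrite IH; tauto]. Qed.

End Walks.

Section CoveringWalk.

Variables (T : finType) (e : T -> T -> Prop).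
Hypothesis e_sym : forall u v, e u v -> e v u.
Hypothesis e_connected : forall u v, clos_refl_trans T e u v.

Lemma connected_cross_edge (A : {pred T}) x y : x \in A -> y \notin A ->
  exists u w, [/\ u \in A, w \notin A & e u w].
Proof.
move: (clos_rt_rt1n _ _ _ _ (e_connected x y)).
elim=> [z zA /negP[] //|x0 z y0 e_x0z _ IH] x0A yA.
by case: (boolP (z \in A)) => zA; [exact: IH | exists x0, z].
Qed.

Lemma closed_walk_covering r k : k < #|T| ->
  exists p, [/\ ppath e r p, last r p = r, size p <= 2 * k & k < #|r :: p|].
Proof.
elim: k => [_ | k IH lt_k].
  by exists [::]; split=> //; apply/card_gt0P; exists r; rewrite mem_head.
have [p [rp last_p size_p card_p]] := IH (ltnW lt_k).
case: (ltnP k.+1 #|r :: p|) => [? | le_card].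
  by exists p; split=> //; lia.
have [w wNp] : exists w, w \notin r :: p.
  apply/existsP; apply: contraTT lt_k; rewrite negb_exists => /forallP all_p.
  rewrite -leqNgt (leq_trans _ le_card) // subset_leq_card //.
  by apply/subsetP => z _; exact: negbNE (all_p z).
have [u [w' [up w'Np uw']]] := connected_cross_edge (mem_head r p) wNp.
case/splitPl: up rp last_p size_p card_p w'Np
  => p1 p2 last_p1 rp last_p size_p card_p w'Np.
exists (p1 ++ w' :: u :: p2); split.
- move: rp => /ppath_cat[rp1 rp2]; apply/ppath_cat; rewrite last_p1 /=.
  by rewrite last_p1 in rp2; do !split=> //; exact: e_sym.
- by move: last_p; rewrite !last_cat last_p1.
- by move: size_p; rewrite !size_cat /=; lia.
have sub : [predU1 w' & r :: p1 ++ p2] \subset r :: p1 ++ w' :: u :: p2.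
  apply/subsetP => z; rewrite !inE !mem_cat !inE.
  by do ![case/orP | move->]; rewrite ?orbT.
apply: leq_trans (subset_leq_card sub); rewrite cardU1 w'Np add1n ltnS.
exact: card_p.
Qed.

Lemma covering_walk : 1 < #|T| ->
  exists r p, [/\ ppath e r p, size p <= 2 * #|T| - 3 & forall v, v \in r :: p].
Proof.
move=> T_gt1; have [r _] : exists r, r \in T by apply/card_gt0P; exact: ltnW.
have [|p [rp last_p size_p card_p]] := @closed_walk_covering r (#|T| - 1).
  lia.
case/lastP: p rp last_p size_p card_p => [|p z] rp last_p size_p card_p.
  exfalso; have /= := leq_trans card_p (card_size [:: r]).
  by rewrite ltnS leqn0 subn_eq0 leqNgt T_gt1.
rewrite last_rcons in last_p; subst z.
have card_full : #|r :: rcons p r| = #|T|.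
  by apply/eqP; rewrite eqn_leq max_card -(subnK (ltnW T_gt1)) addn1.
have full := subset_cardP card_full (subset_predT _).
exists r, p; split.
- by move: rp; rewrite -cats1 => /ppath_cat[].
- by move: size_p; rewrite size_rcons; lia.
by move=> v; move: (full v); rewrite !inE mem_rcons !inE orbA orbb.
Qed.

End CoveringWalk.

Section PublicTransport.

Variables (V : eqType) (m : nat) (W : 'I_m -> seq (step V)).
Hypothesis W_walk : forall i, is_temporal_walk (W i).

Local Notation Lmax := (\max_(i < m) walk_length (W i)).

Lemma underlying_edge_sym u v : underlying_edge W u v -> underlying_edge W v u.
Proof.
move=> [t [t_gt0 [i [x xWi [uv tx]]]]]; exists t; split=> //.
by exists i, x => //; rewrite /step_edge orbC.
Qed.

Lemma underlying_edge_active_within a u v : underlying_edge W u v ->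
  exists t, [/\ a < t, t <= a + Lmax & pt_active W t u v].
Proof.
move=> [_ [_ [i [x xWi [uv _]]]]].
have L_gt0 := walk_length_gt0 (W_walk i).
have L_le : walk_length (W i) <= Lmax by apply: (leq_bigmax_cond i).
have [t [a_lt t_le t_mod]] := exists_congr_in_window a (time x) L_gt0.
exists t; split=> //; first by rewrite (leq_trans t_le) ?leq_add2l.
by exists i, x.
Qed.

(* [x0] acts as the previous step: the walk starts at [dst x0] after time
   [time x0]. *)
Lemma temporal_walk_along x0 p : ppath (underlying_edge W) (dst x0) p ->
  exists s, [/\ path next_step x0 s, map dst s = p,
    last (time x0) (map time s) <= time x0 + size p * Lmax &
    {in s, forall x, pt_active W (time x) (src x) (dst x)}].
Proof.
elim: p x0 => [|v p IH] x0 /=; first by exists [::]; split=> //; rewrite addn0.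
case=> /(underlying_edge_active_within (time x0)) [t [x0_lt t_le uv_t]] vp.
have [s [xs dst_s time_s act_s]] := IH ((dst x0, v), t) vp.
exists (((dst x0, v), t) :: s); split=> /=.
- by rewrite /next_step eqxx x0_lt.
- by rewrite dst_s.
- by rewrite /= (leq_trans time_s) // mulSn addnA leq_add2r.
by move=> x; rewrite inE => /predU1P[-> //|]; exact: act_s.
Qed.

End PublicTransport.

Theorem theorem12 (V : finType) (m : nat) (W : 'I_m -> seq (step V)) :
  2 <= #|V| ->
  (forall i : 'I_m, is_temporal_walk (W i)) ->
  underlying_connected W ->
  exists s : seq (step V),
    [/\ pt_temporal_walk W s, explores_all s &
        walk_length s <= (2 * #|V| - 3) * \max_(i < m) walk_length (W i)].
Proof.
move=> V_gt1 W_walk W_connected.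
have [r [p [rp size_p cover]]] :=
  covering_walk (@underlying_edge_sym _ _ W) W_connected V_gt1.
have [s [rs dst_s time_s act_s]] :=
  @temporal_walk_along _ _ W W_walk ((r, r), 0) p rp.
have s_nil : s != [::].
  apply: contraTneq V_gt1 => s0; move: dst_s cover; rewrite s0 => /= <- cover.
  rewrite -leqNgt (leq_trans _ (card_size [:: r])) // subset_leq_card //.
  by apply/subsetP => v _; exact: cover.
exists s; split.
- split=> //; rewrite /is_temporal_walk s_nil (path_sorted rs).
  by rewrite (path_next_step_time rs).
- move=> v; case/predU1P: (cover v) => [->|].
    case: s s_nil rs {dst_s time_s act_s} => // y s _.
    case/andP=> /andP[/eqP r_y _] _.
    by exists y; rewrite ?mem_head // -r_y eqxx.
  by rewrite -dst_s => /mapP[x xs ->]; exists x; rewrite ?eqxx ?orbT.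
by rewrite (leq_trans time_s) // leq_mul2r size_p orbT.
Qed.
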